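(* Let $(\mathrm{A},(\mathcal{S}_\tau)_{\tau\in\mathbb{R}},u)$ be a symmetric collision model that is stationary at equilibrium. Then for every state $\sigma\in\mathsf{St}_1(\mathrm{A})$, $\sigma$ is invariant under the collisional dynamics it generates: $\mathcal{U}_{t,\sigma}(\sigma)=\sigma$ for all $t\in\mathbb{R}$.
   Context: Setting: an operational probabilistic theory (systems closed under $\otimes$ with trivial system; sets of transformations $\mathsf{Transf}(\mathrm{A}\to\mathrm{B})$ closed under $\circ$ and $\otimes$; states $\mathsf{St}(\mathrm{A})$, effects $\mathsf{Eff}(\mathrm{A})$, deterministic ones $\mathsf{St}_1,\mathsf{Eff}_1$; probabilities from closed circuits; transformation spaces finite-dimensional, sets of transformations convex and closed). $\mathsf{G}_{\mathrm{A}}$ denotes the (compact Lie) group of reversible transformations of $\mathrm{A}$. A symmetric collision model $(\mathrm{A},(\mathcal{S}_\tau),u)$ consists of a system $\mathrm{A}$, a one-parameter subgroup $(\mathcal{S}_\tau)_{\tau\in\mathbb{R}}$ of $\mathsf{G}_{\mathrm{A}\otimes\mathrm{A}}$ and a deterministic effect $u\in\mathsf{Eff}_1(\mathrm{A})$. For $\sigma\in\mathsf{St}_1(\mathrm{A})$ the collision is $\mathcal{C}_{\tau,\sigma}=(\mathcal{I}_{\mathrm{A}}\otimes u)\circ\mathcal{S}_\tau\circ(\mathcal{I}_{\mathrm{A}}\otimes\sigma)$ and the collisional dynamics is $\mathcal{U}_{t,\sigma}=\lim_{n\to\infty}(\mathcal{C}_{t/n,\sigma})^n$. The model is stationary at equilibrium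 if $\mathcal{S}_\tau(\rho\otimes\rho)=\rho\otimes\rho$ for all $\rho\in\mathsf{St}_1(\mathrm{A})$ and all $\tau\in\mathbb{R}$. *)

From HB Require Import structures.
From mathcomp Require Import all_boot all_order all_algebra.
From mathcomp Require Import all_classical all_reals all_analysis.
Set Implicit Arguments. Unset Strict Implicit. Unset Printing Implicit Defensive.
Import Order.TTheory GRing.Theory Num.Theory.
Import numFieldNormedType.Exports.
Local Open Scope classical_set_scope.
Local Open Scope ring_scope.

(* An operational probabilistic theory.
   - osys: systems, otriv the trivial system, otens the parallel composition;
   - ohom A B: the (finite-dimensional) real span of Transf(A -> B), a normed
     real vector space in which Transf(A -> B) sits;
   - ocomp g f = g o f (sequential composition), otensor f g = f (x) g;
   - orunit A : A (x) I -> A and orunitI A : A -> A (x) I are the (reversible,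
     deterministic) canonical identifications of A (x) I with A;
   - otransf A B = Transf(A -> B); otest A B: the tests (finite families of
     events, i.e. of transformations) from A to B;
   - oprob identifies the transformations of the trivial system with real
     numbers (probabilities of closed circuits). *)
Record OPT (R : realType) := {
  osys : Type;
  otriv : osys;
  otens : osys -> osys -> osys;
  ohom : osys -> osys -> normedModType R;
  ocomp : forall A B C, ohom B C -> ohom A B -> ohom A C;
  otensor : forall A B C D, ohom A B -> ohom C D -> ohom (otens A C) (otens B D);
  oid : forall A, ohom A A;
  orunit : forall A, ohom (otens A otriv) A;
  orunitI : forall A, ohom A (otens A otriv);
  otransf : forall A B, set (ohom A B);
  otest : forall A B, set (seq (ohom A B));
  oprob : ohom otriv otriv -> R;
  ocompA : forall A B C D (h : ohom C D) (g : ohom B C) (f : ohom A B),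
      ocomp h (ocomp g f) = ocomp (ocomp h g) f;
  ocomp1f : forall A B (f : ohom A B), ocomp (oid B) f = f;
  ocompf1 : forall A B (f : ohom A B), ocomp f (oid A) = f;
  ocomp_linl : forall A B C (f : ohom A B) (a : R) (g1 g2 : ohom B C),
      ocomp (a *: g1 + g2) f = a *: ocomp g1 f + ocomp g2 f;
  ocomp_linr : forall A B C (g : ohom B C) (a : R) (f1 f2 : ohom A B),
      ocomp g (a *: f1 + f2) = a *: ocomp g f1 + ocomp g f2;
  ocomp_cont : forall A B C,
      continuous (fun p : ohom B C * ohom A B => ocomp p.1 p.2);
  otensor_comp : forall A B C D E F (f : ohom B C) (f' : ohom A B)
      (g : ohom E F) (g' : ohom D E),
      otensor (ocomp f f') (ocomp g g') = ocomp (otensor f g) (otensor f' g');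
  otensor_id : forall A C, otensor (oid A) (oid C) = oid (otens A C);
  orunit_nat : forall A B (f : ohom A B),
      ocomp (orunit B) (otensor f (oid otriv)) = ocomp f (orunit A);
  orunitK : forall A, ocomp (orunitI A) (orunit A) = oid (otens A otriv);
  orunitIK : forall A, ocomp (orunit A) (orunitI A) = oid A;
  otransf_comp : forall A B C (g : ohom B C) (f : ohom A B),
      otransf g -> otransf f -> otransf (ocomp g f);
  otransf_tensor : forall A B C D (f : ohom A B) (g : ohom C D),
      otransf f -> otransf g -> otransf (otensor f g);
  otransf_convex : forall A B (f g : ohom A B) (a : R), 0 <= a <= 1 ->
      otransf f -> otransf g -> otransf (a *: f + (1 - a) *: g);
  otransf_closed : forall A B, closed (@otransf A B);
  otest_transf : forall A B (t : seq (ohom A B)) f,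
      otest t -> f \in t -> otransf f;
  otest_id : forall A, otest [:: oid A];
  otest_runit : forall A, otest [:: orunit A];
  otest_runitI : forall A, otest [:: orunitI A];
  otest_comp : forall A B C (t2 : seq (ohom B C)) (t1 : seq (ohom A B)),
      otest t2 -> otest t1 -> otest [seq ocomp g f | g <- t2, f <- t1];
  otest_tensor : forall A B C D (t1 : seq (ohom A B)) (t2 : seq (ohom C D)),
      otest t1 -> otest t2 -> otest [seq otensor f g | f <- t1, g <- t2];
  oprob_inj : injective oprob;
  oprob_id : oprob (oid otriv) = 1;
  oprob_test : forall t : seq (ohom otriv otriv), otest t ->
      all (fun p => 0 <= oprob p) t /\ \sum_(p <- t) oprob p = 1
}.

Arguments otriv {R} _.
Arguments otens {R _}.
Arguments ohom {R _}.
Arguments ocomp {R _ A B C}.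
Arguments otensor {R _ A B C D}.
Arguments oid {R _}.
Arguments orunit {R _}.
Arguments orunitI {R _}.
Arguments otransf {R _ A B}.
Arguments otest {R _ A B}.

Section Defs.
Variables (R : realType) (O : OPT R).

Definition deterministic (A B : osys O) (f : ohom A B) : Prop := otest [:: f].

Definition St1 (A : osys O) : set (ohom (otriv O) A) := [set s | deterministic s].
Definition Eff1 (A : osys O) : set (ohom A (otriv O)) := [set e | deterministic e].
Definition St (A : osys O) : set (ohom (otriv O) A) := otransf.

Definition reversible (A : osys O) (T : ohom A A) : Prop :=
  otransf T /\ exists T' : ohom A A,
    [/\ otransf T', ocomp T' T = oid A & ocomp T T' = oid A].

(* product state rho (x) rho' in St(A (x) B) (I (x) I identified with I) *)
Definition prod_state (A B : osys O) (rho : ohom (otriv O) A)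
    (rho' : ohom (otriv O) B) : ohom (otriv O) (otens A B) :=
  ocomp (otensor rho rho') (orunitI (otriv O)).

Definition one_param_subgroup (A : osys O) (S : R -> ohom (otens A A) (otens A A)) :=
  [/\ S 0 = oid (otens A A),
      (forall s t, S (s + t) = ocomp (S s) (S t)),
      (forall t, reversible (S t)) & continuous S].

Definition symmetric_collision_model (A : osys O)
    (S : R -> ohom (otens A A) (otens A A)) (u : ohom A (otriv O)) :=
  one_param_subgroup S /\ Eff1 u.

(* C_{tau,sigma} = (I_A (x) u) o S_tau o (I_A (x) sigma), A (x) I identified with A *)
Definition collision (A : osys O) (S : R -> ohom (otens A A) (otens A A))
    (u : ohom A (otriv O)) (sigma : ohom (otriv O) A) (tau : R) : ohom A A :=
  ocomp (orunit A) (ocomp (otensor (oid A) u)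
    (ocomp (S tau) (ocomp (otensor (oid A) sigma) (orunitI A)))).

Definition opow (A : osys O) (T : ohom A A) (n : nat) : ohom A A :=
  iter n (ocomp T) (oid A).

(* U_{t,sigma} = lim_n (C_{t/n,sigma})^n : L is that limit *)
Definition is_collisional_dynamics (A : osys O)
    (S : R -> ohom (otens A A) (otens A A)) (u : ohom A (otriv O))
    (sigma : ohom (otriv O) A) (t : R) (L : ohom A A) : Prop :=
  (fun n : nat => opow (collision S u sigma (t / n%:R)) n) @ \oo --> L.

Definition stationary_at_equilibrium (A : osys O)
    (S : R -> ohom (otens A A) (otens A A)) : Prop :=
  forall rho, St1 rho -> forall tau, ocomp (S tau) (prod_state rho rho) = prod_state rho rho.

End Defs.

(** A collision with the equilibrium state [sigma] as environment
    prepares [sigma (x) sigma], which stationarity leaves unchanged; discarding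
    the environment with the deterministic effect [u] then returns [sigma],
    since [u o sigma = 1]. Hence [sigma] is a fixed point of every collision
    [C_{tau,sigma}], so of all its powers, and, composition being continuous,
    of their limit [U_{t,sigma}]. *)
From HB Require Import structures.
From mathcomp Require Import all_boot all_order all_algebra.
From mathcomp Require Import all_classical all_reals all_analysis.
Set Implicit Arguments. Unset Strict Implicit.
Import numFieldNormedType.Exports.
Local Open Scope classical_set_scope.
Local Open Scope ring_scope.

Section CollisionFixedPoint.
Variables (R : realType) (O : OPT R).

Lemma orunitI_nat (A B : osys O) (f : ohom A B) :
  ocomp (otensor f (oid (otriv O))) (orunitI A) = ocomp (orunitI B) f.
Proof.
have -> : otensor f (oid (otriv O)) =
    ocomp (orunitI B) (ocomp (orunit B) (otensor f (oid (otriv O)))).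
  by rewrite ocompA orunitK ocomp1f.
by rewrite orunit_nat -!ocompA orunitIK ocompf1.
Qed.

Lemma Eff1_St1_normalized (A : osys O) (e : ohom A (otriv O))
    (s : ohom (otriv O) A) :
  Eff1 e -> St1 s -> ocomp e s = oid (otriv O).
Proof.
move=> he hs; have [_] := oprob_test (otest_comp he hs).
rewrite big_seq1 => prob_es.
by apply: oprob_inj; rewrite prob_es oprob_id.
Qed.

Lemma prod_stateE (A B : osys O) (rho : ohom (otriv O) A)
    (sigma : ohom (otriv O) B) :
  ocomp (otensor (oid A) sigma) (ocomp (orunitI A) rho) = prod_state rho sigma.
Proof.
by rewrite -orunitI_nat ocompA -otensor_comp ocomp1f ocompf1.
Qed.

Lemma discard_prod_state (A B : osys O) (e : ohom B (otriv O))
    (rho : ohom (otriv O) A) (sigma : ohom (otriv O) B) :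
  ocomp e sigma = oid (otriv O) ->
  ocomp (orunit A) (ocomp (otensor (oid A) e) (prod_state rho sigma)) = rho.
Proof.
move=> e_sigma; rewrite /prod_state (ocompA (otensor _ e)) -otensor_comp.
rewrite ocomp1f e_sigma.
by rewrite orunitI_nat ocompA orunitIK ocomp1f.
Qed.

Lemma collision_St1_fixed (A : osys O) (S : R -> ohom (otens A A) (otens A A))
    (u : ohom A (otriv O)) (sigma : ohom (otriv O) A) (tau : R) :
  Eff1 u -> stationary_at_equilibrium S -> St1 sigma ->
  ocomp (collision S u sigma tau) sigma = sigma.
Proof.
move=> hu hstat hsigma.
rewrite /collision -!ocompA prod_stateE (hstat _ hsigma).
exact/discard_prod_state/Eff1_St1_normalized.
Qed.

Lemma opow_fixed (A B : osys O) (T : ohom A A) (x : ohom B A) (n : nat) :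
  ocomp T x = x -> ocomp (opow T n) x = x.
Proof.
move=> Tx; elim: n => [|n IHn] /=; first by rewrite ocomp1f.
by rewrite -ocompA IHn.
Qed.

Lemma ocomp_cvgl (A B C : osys O) (f : nat -> ohom B C) (L : ohom B C)
    (x : ohom A B) :
  f @ \oo --> L -> (fun n => ocomp (f n) x) @ \oo --> ocomp L x.
Proof.
move=> fL; apply: (@continuous2_cvg _ _ _ _ _ _ _ _ (fun g y => ocomp g y)).
- exact: (@ocomp_cont R O A B C (L, x)).
- exact: fL.
- exact: cvg_cst.
Qed.

End CollisionFixedPoint.

Theorem lemma1 (R : realType) (O : OPT R) (A : osys O)
    (S : R -> ohom (otens A A) (otens A A)) (u : ohom A (otriv O)) :
  symmetric_collision_model S u ->
  stationary_at_equilibrium S ->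
  forall sigma : ohom (otriv O) A, St1 sigma ->
  forall (t : R) (U : ohom A A), is_collisional_dynamics S u sigma t U ->
  ocomp U sigma = sigma.
Proof.
move=> [_ hu] hstat sigma hsigma t U hU.
have := ocomp_cvgl (x := sigma) hU.
under eq_fun => n do rewrite opow_fixed ?collision_St1_fixed //.
move=> cvg_sigma; exact: (cvg_unique _ cvg_sigma (cvg_cst sigma)).
Qed.
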